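(* Let $c>0$, $\epsilon>0$, $T>0$, and let $\{\phi^j_t\}_{j\ge0}$, $t\in[0,T]$, be the solution of the infinite system $$\dot\phi^0_t=(\phi^0_t)^2-\epsilon,\ \phi^0_T=c;\qquad \dot\phi^1_t=2\phi^0_t\phi^1_t+\epsilon,\ \phi^1_T=-c;\qquad \dot\phi^j_t=\sum_{k=0}^{j}\phi^k_t\phi^{j-k}_t,\ \phi^j_T=0\ (j\ge2).$$ Then for every $t\in[0,T]$, $$\phi^0_t=\frac{(-\epsilon-c\sqrt\epsilon)e^{2\sqrt\epsilon(T-t)}+\epsilon-c\sqrt\epsilon}{(-\sqrt\epsilon-c)e^{2\sqrt\epsilon(T-t)}-\sqrt\epsilon+c}>0,$$ the series $\sum_{j\ge0}\phi^j_t$ converges and $\sum_{j=0}^\infty\phi^j_t=0$. Moreover the generating function $S_t(z)=\sum_{k\ge0}z^k\phi^k_t$ satisfies $S_t(1)=0$ and, for $0\le z<1$ (writing $w=\sqrt{\epsilon(1-z)}$), $$S_t(z)=\frac{(-\epsilon(1-z)-c\,w(1-z))e^{2w(T-t)}+\epsilon(1-z)-c\,w(1-z)}{(-w-c(1-z))e^{2w(T-t)}-w+c(1-z)},$$ so the $\phi^k_t$ are the Taylor coefficients of this function in $z$.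
   Context: Note that each equation for $\phi^j$ involves only $\phi^0,\dots,\phi^j$ (the equation for $\phi^j$, $j\ge1$, is linear in $\phi^j$ given the lower-index functions), so the system is solved recursively. *)

From Stdlib Require Import Reals Lra.
Open Scope R_scope.

Definition has_deriv_on (f f' : R -> R) (a b : R) : Prop :=
  forall t, a <= t <= b ->
    forall eps, 0 < eps -> exists delta, 0 < delta /\
      forall h, h <> 0 -> Rabs h < delta -> a <= t + h <= b ->
        Rabs ((f (t + h) - f t) / h - f' t) < eps.

Definition is_solution (c eps T : R) (phi : nat -> R -> R) : Prop :=
  has_deriv_on (phi 0%nat) (fun t => (phi 0%nat t) ^ 2 - eps) 0 T /\
  phi 0%nat T = c /\
  has_deriv_on (phi 1%nat) (fun t => 2 * phi 0%nat t * phi 1%nat t + eps) 0 T /\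
  phi 1%nat T = - c /\
  (forall j, (2 <= j)%nat ->
     has_deriv_on (phi j)
       (fun t => sum_f_R0 (fun k => phi k t * phi (j - k)%nat t) j) 0 T /\
     phi j T = 0).

(* The equation for [phi^0] is the scalar Riccati equation [y' = y^2 - eps],
   [y(T) = c], whose solution is the explicit formula; uniqueness comes from a
   backward Gronwall comparison, which also shows inductively that
   [phi^j <= 0] for [j >= 1].  For [0 <= z < 1] the partial sums
   [P_N = sum_(j <= N) z^j phi^j] satisfy [P_N' = P_N^2 - eps (1 - z) - R_N],
   where the Cauchy-product remainder [R_N] is nonnegative and, thanks to the
   a priori bound [z^k |phi^k| <= max phi^0] (valid for every [z < 1]),
   geometrically small.  Comparing with the solution [F_z] of
   [F' = F^2 - eps (1 - z)], [F(T) = c (1 - z)] gives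
   [F_z <= P_N <= F_z + O(rho^N)], hence [P_N -> F_z].  At [z = 1] the
   comparison solution is [0], so [0 <= P_N(1) <= P_N(z) -> F_z], and
   [F_z(t) -> 0] as [z -> 1]. *)

From Stdlib Require Import Reals Lra Lia Arith.
From Coquelicot Require Import Coquelicot.
Open Scope R_scope.

Definition increment_within (a b t h : R) : Prop := h <> 0 /\ a <= t + h <= b.

Lemma has_deriv_on_limit1_in f f' a b :
  has_deriv_on f f' a b <->
  forall t, a <= t <= b ->
    limit1_in (fun h => (f (t + h) - f t) / h) (increment_within a b t) (f' t) 0.
Proof.
  unfold has_deriv_on, limit1_in, limit_in, increment_within; simpl; unfold Rdist.
  split; intros H t Ht e He; destruct (H t Ht e He) as [d [Hd Hh]];
    exists d; split; auto.
  - intros h [[Hh0 Hht] Hhd]. rewrite Rminus_0_r in Hhd. now apply Hh.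
  - intros h Hh0 Hhd Hht. apply Hh. rewrite Rminus_0_r. auto.
Qed.

Lemma has_deriv_on_ext f f' g g' a b :
  (forall t, f t = g t) -> (forall t, a <= t <= b -> f' t = g' t) ->
  has_deriv_on f f' a b -> has_deriv_on g g' a b.
Proof.
  intros Efg Efg' H t Ht e He. destruct (H t Ht e He) as [d [Hd Hh]].
  exists d; split; [exact Hd|]. intros h Hh0 Hhd Hht. rewrite <- !Efg, <- Efg'; auto.
Qed.

Lemma has_deriv_on_plus f f' g g' a b :
  has_deriv_on f f' a b -> has_deriv_on g g' a b ->
  has_deriv_on (fun t => f t + g t) (fun t => f' t + g' t) a b.
Proof.
  rewrite !has_deriv_on_limit1_in; intros Hf Hg t Ht.
  apply limit1_ext with (fun h => (f (t + h) - f t) / h + (g (t + h) - g t) / h).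
  - intros h [Hh _]. field. exact Hh.
  - apply limit_plus; auto.
Qed.

Lemma has_deriv_on_minus f f' g g' a b :
  has_deriv_on f f' a b -> has_deriv_on g g' a b ->
  has_deriv_on (fun t => f t - g t) (fun t => f' t - g' t) a b.
Proof.
  rewrite !has_deriv_on_limit1_in; intros Hf Hg t Ht.
  apply limit1_ext with (fun h => (f (t + h) - f t) / h - (g (t + h) - g t) / h).
  - intros h [Hh _]. field. exact Hh.
  - apply limit_minus; auto.
Qed.

Lemma has_deriv_on_cont_limit1_in f f' a b t :
  has_deriv_on f f' a b -> a <= t <= b ->
  limit1_in (fun h => f (t + h)) (increment_within a b t) (f t) 0.
Proof.
  rewrite has_deriv_on_limit1_in; intros Hf Ht.
  pose proof (limit_plus _ _ _ _ _ _ (limit_free f _ t 0)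
    (limit_mul _ _ _ _ _ _ (lim_x (increment_within a b t) 0) (Hf t Ht))) as H.
  rewrite Rmult_0_l, Rplus_0_r in H.
  apply limit1_ext with (2 := H). intros h [Hh _]. field. exact Hh.
Qed.

Lemma has_deriv_on_continuity f f' a b t :
  has_deriv_on f f' a b -> a <= t <= b ->
  forall e, 0 < e -> exists d, 0 < d /\
    forall h, Rabs h < d -> a <= t + h <= b -> Rabs (f (t + h) - f t) < e.
Proof.
  intros Hf Ht e He.
  destruct (has_deriv_on_cont_limit1_in f f' a b t Hf Ht e He) as [d [Hd Hh]].
  exists d; split; [exact Hd|]. intros h Hhd Hht.
  destruct (Req_dec h 0) as [->|Hh0].
  - rewrite Rplus_0_r, Rminus_diag, Rabs_R0. exact He.
  - apply (Hh h). split; [split; auto|]. simpl; unfold Rdist. now rewrite Rminus_0_r.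
Qed.

Lemma has_deriv_on_mult f f' g g' a b :
  has_deriv_on f f' a b -> has_deriv_on g g' a b ->
  has_deriv_on (fun t => f t * g t) (fun t => f' t * g t + f t * g' t) a b.
Proof.
  intros Hf Hg.
  pose proof (fun t => has_deriv_on_cont_limit1_in g g' a b t Hg) as Hgt.
  rewrite has_deriv_on_limit1_in in Hf, Hg |- *. intros t Ht.
  apply limit1_ext with
    (fun h => (f (t + h) - f t) / h * g (t + h) + f t * ((g (t + h) - g t) / h)).
  - intros h [Hh _]. field. exact Hh.
  - apply limit_plus; apply limit_mul; auto. apply (limit_free f).
Qed.

Lemma has_deriv_on_const k a b : has_deriv_on (fun _ => k) (fun _ => 0) a b.
Proof.
  intros t _ e He. exists 1; split; [lra|]. intros h Hh _ _.
  replace ((k - k) / h - 0) with 0 by (field; exact Hh). rewrite Rabs_R0. exact He.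
Qed.

Lemma has_deriv_on_sum (F F' : nat -> R -> R) a b N :
  (forall k, (k <= N)%nat -> has_deriv_on (F k) (F' k) a b) ->
  has_deriv_on (fun t => sum_f_R0 (fun k => F k t) N)
    (fun t => sum_f_R0 (fun k => F' k t) N) a b.
Proof.
  induction N as [|N IH]; intros H; simpl.
  - apply H; lia.
  - apply has_deriv_on_plus; [apply IH; intros; apply H|apply H]; lia.
Qed.

Lemma has_deriv_on_of_derivable_pt_lim f f' a b :
  (forall t, a <= t <= b -> derivable_pt_lim f t (f' t)) -> has_deriv_on f f' a b.
Proof.
  intros H. apply has_deriv_on_limit1_in; intros t Ht.
  apply limit1_imp with (fun h => h <> 0).
  - intros h [Hh _]; exact Hh.
  - now apply uniqueness_step2, H.
Qed.

Lemma has_deriv_on_exp_backward d L s a b :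
  has_deriv_on (fun t => d * exp (L * (s - t)))
    (fun t => - (d * L) * exp (L * (s - t))) a b.
Proof.
  apply has_deriv_on_of_derivable_pt_lim; intros t _. apply is_derive_Reals.
  auto_derive; [exact I|]. replace (s + - t) with (s - t) by ring. ring.
Qed.

Lemma exp_le_exp_compat x y : x <= y -> exp x <= exp y.
Proof.
  intros [Hlt| ->]; [left; now apply exp_increasing|lra].
Qed.

Lemma one_le_exp x : 0 <= x -> 1 <= exp x.
Proof. intros; pose proof (exp_ineq1_le x); lra. Qed.

(** * Backward comparison *)

Lemma has_deriv_on_pos_right g g' a b m :
  has_deriv_on g g' a b -> a <= m < b -> 0 <= g m -> (g m = 0 -> 0 < g' m) ->
  exists h, 0 < h <= b - m /\ 0 < g (m + h).
Proof.
  intros Hg Hm Hgm Hz.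
  destruct (Rle_lt_or_eq_dec _ _ Hgm) as [Hpos|Hzero].
  - destruct (has_deriv_on_continuity g g' a b m Hg ltac:(lra) (g m) Hpos) as [d [Hd Hh]].
    set (h := Rmin (d / 2) (b - m)).
    assert (0 < h) by (apply Rmin_glb_lt; lra).
    assert (h <= d / 2) by apply Rmin_l. assert (h <= b - m) by apply Rmin_r.
    exists h; split; [lra|].
    assert (Hgh := Hh h ltac:(rewrite Rabs_right; lra) ltac:(lra)).
    apply Rabs_def2 in Hgh. lra.
  - specialize (Hz (eq_sym Hzero)).
    destruct (Hg m ltac:(lra) (g' m) Hz) as [d [Hd Hh]].
    set (h := Rmin (d / 2) (b - m)).
    assert (0 < h) by (apply Rmin_glb_lt; lra).
    assert (h <= d / 2) by apply Rmin_l. assert (h <= b - m) by apply Rmin_r.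
    exists h; split; [lra|].
    assert (Hq := Hh h ltac:(lra) ltac:(rewrite Rabs_right; lra) ltac:(lra)).
    rewrite <- Hzero, Rminus_0_r in Hq. apply Rabs_def2 in Hq.
    replace (g (m + h)) with (g (m + h) / h * h) by (field; lra).
    apply Rmult_lt_0_compat; lra.
Qed.

(* Consider the supremum of the points of [t, b] where [g] is nonnegative. *)
Lemma neg_on_of_deriv_pos_at_zeros g g' a b :
  has_deriv_on g g' a b -> g b < 0 ->
  (forall t, a <= t <= b -> g t = 0 -> 0 < g' t) ->
  forall t, a <= t <= b -> g t < 0.
Proof.
  intros Hg Hb Hz t0 Ht0. destruct (Rlt_or_le (g t0) 0) as [|Hg0]; [assumption|exfalso].
  set (E := fun x => t0 <= x <= b /\ 0 <= g x).
  destruct (completeness E) as [m [Hub Hlub]].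
  { exists b; intros x [Hx _]; lra. }
  { exists t0; split; [lra|exact Hg0]. }
  assert (Ht0m : t0 <= m) by (apply Hub; split; [lra|exact Hg0]).
  assert (Hmb : m <= b) by (apply Hlub; intros x [Hx _]; lra).
  assert (Hgm : 0 <= g m).
  { destruct (Rlt_or_le (g m) 0) as [Hlt|]; [exfalso|assumption].
    destruct (has_deriv_on_continuity g g' a b m Hg ltac:(lra) (- g m) ltac:(lra))
      as [d [Hd Hh]].
    assert (Hbound : m <= m - d); [|lra].
    apply Hlub. intros x [Hx Hgx].
    destruct (Rlt_or_le (m - d) x) as [Hxd|]; [exfalso|assumption].
    assert (x <= m) by (apply Hub; split; assumption).
    assert (Hgx' := Hh (x - m) ltac:(rewrite Rabs_left1; lra) ltac:(lra)).
    replace (m + (x - m)) with x in Hgx' by ring. apply Rabs_def2 in Hgx'. lra. }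
  assert (Hmb' : m < b) by (destruct Hmb as [| ->]; [assumption|lra]).
  destruct (has_deriv_on_pos_right g g' a b m Hg ltac:(lra) Hgm (Hz m ltac:(lra)))
    as [h [Hh Hgh]].
  assert (m + h <= m); [|lra].
  apply Hub. split; [lra|now left].
Qed.

(* Backward Gronwall argument: compare [f] with [d * exp ((K + 1) (b - t))]
   for a small [d > 0]. *)
Lemma nonpos_of_backward_gronwall f f' a b K :
  has_deriv_on f f' a b -> f b <= 0 -> 0 <= K ->
  (forall t, a <= t <= b -> 0 < f t <= 1 -> - K * f t <= f' t) ->
  forall t, a <= t <= b -> f t <= 0.
Proof.
  intros Hf Hb HK Hf' t1 Ht1.
  destruct (Rle_or_lt (f t1) 0) as [|Hpos]; [assumption|exfalso].
  set (m := Rmin 1 (f t1)).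
  assert (Hm : 0 < m) by (apply Rmin_glb_lt; lra).
  assert (m <= 1) by apply Rmin_l. assert (m <= f t1) by apply Rmin_r.
  set (L := K + 1). set (d := m * exp (- (L * (b - a)))).
  assert (Hd : 0 < d) by (apply Rmult_lt_0_compat; [exact Hm|apply exp_pos]).
  assert (Hdm : forall t, a <= t <= b -> d * exp (L * (b - t)) <= m).
  { intros t Ht. unfold d. rewrite Rmult_assoc, <- exp_plus.
    rewrite <- (Rmult_1_r m) at 2. apply Rmult_le_compat_l; [lra|].
    rewrite <- exp_0. apply exp_le_exp_compat. unfold L. nra. }
  assert (Hg := neg_on_of_deriv_pos_at_zeros _ _ a b
    (has_deriv_on_minus _ _ _ _ _ _ Hf (has_deriv_on_exp_backward d L b a b))).
  assert (f t1 - d * exp (L * (b - t1)) < 0); [|specialize (Hdm t1 Ht1); lra].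
  apply Hg; [|intros t Ht Hzero|exact Ht1].
  - rewrite Rminus_diag, Rmult_0_r, exp_0. lra.
  - assert (0 < d * exp (L * (b - t))) by (apply Rmult_lt_0_compat; [exact Hd|apply exp_pos]).
    assert (Hft : f t = d * exp (L * (b - t))) by lra.
    specialize (Hdm t Ht). specialize (Hf' t Ht ltac:(lra)). rewrite Hft in Hf'.
    unfold L in *. lra.
Qed.

(** * The scalar Riccati equation *)

(* The solution of [F' = F ^ 2 - w ^ 2], [F T = c'], for [w > 0] and [c' >= 0]. *)
Definition riccati (w c' T t : R) : R :=
  w * ((w + c') * exp (2 * w * (T - t)) + c' - w) /
  ((w + c') * exp (2 * w * (T - t)) + w - c').

Lemma riccati_denom_ge w c' T t : 0 < w -> 0 <= c' -> t <= T ->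
  2 * w <= (w + c') * exp (2 * w * (T - t)) + w - c'.
Proof.
  intros. assert (1 <= exp (2 * w * (T - t))) by (apply one_le_exp; nra). nra.
Qed.

Lemma riccati_has_deriv_on w c' T : 0 < w -> 0 <= c' ->
  has_deriv_on (riccati w c' T) (fun t => riccati w c' T t ^ 2 - w * w) 0 T.
Proof.
  intros Hw Hc. apply has_deriv_on_of_derivable_pt_lim; intros t Ht.
  assert (Hd := riccati_denom_ge w c' T t Hw Hc ltac:(lra)).
  apply is_derive_Reals. unfold riccati. auto_derive;
    replace (T + - t) with (T - t) by ring; [lra|field; lra].
Qed.

Lemma riccati_at_end w c' T : 0 < w -> riccati w c' T T = c'.
Proof. intros. unfold riccati. rewrite Rminus_diag, Rmult_0_r, exp_0. field. lra. Qed.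

Lemma riccati_bounds w c' T t : 0 < w -> 0 <= c' -> t <= T ->
  0 <= riccati w c' T t <= ((w + c') * exp (2 * w * (T - t)) + c') / 2.
Proof.
  intros Hw Hc Ht. assert (Hd := riccati_denom_ge w c' T t Hw Hc Ht).
  assert (1 <= exp (2 * w * (T - t))) by (apply one_le_exp; nra).
  unfold riccati. set (E := exp (2 * w * (T - t))) in *.
  split.
  - apply Rmult_le_pos; [nra|]. left; apply Rinv_0_lt_compat; lra.
  - apply Rmult_le_reg_r with ((w + c') * E + w - c'); [lra|].
    unfold Rdiv. rewrite Rmult_assoc, Rinv_l by lra. nra.
Qed.

Lemma riccati_pos w c' T t : 0 < w -> 0 < c' -> t <= T -> 0 < riccati w c' T t.
Proof.
  intros Hw Hc Ht. assert (Hd := riccati_denom_ge w c' T t Hw ltac:(lra) Ht).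
  assert (1 <= exp (2 * w * (T - t))) by (apply one_le_exp; nra).
  apply Rdiv_lt_0_compat; nra.
Qed.

Lemma riccati_closed_form w c' e a T t :
  0 < w -> 0 <= c' -> t <= T -> e = w * w -> a = c' * w ->
  ((- e - a) * exp (2 * w * (T - t)) + e - a) /
  ((- w - c') * exp (2 * w * (T - t)) - w + c') = riccati w c' T t.
Proof.
  intros Hw Hc Ht -> ->. assert (Hd := riccati_denom_ge w c' T t Hw Hc Ht).
  unfold riccati. field. lra.
Qed.

Lemma sum_f_R0_nonneg (a : nat -> R) N :
  (forall k, (k <= N)%nat -> 0 <= a k) -> 0 <= sum_f_R0 a N.
Proof.
  intros H. apply Rle_trans with (sum_f_R0 (fun _ => 0) N).
  - rewrite sum_cte. lra.
  - apply sum_Rle. exact H.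
Qed.

Lemma pow_antimono x m n : 0 <= x <= 1 -> (m <= n)%nat -> x ^ n <= x ^ m.
Proof.
  intros Hx Hmn. replace n with (m + (n - m))%nat by lia. rewrite pow_add.
  assert (0 <= x ^ m) by (apply pow_le; lra).
  assert (x ^ (n - m) <= 1) by (rewrite <- (pow1 (n - m)); apply pow_incr; lra).
  nra.
Qed.

Lemma sum_pow_le r N : 0 <= r < 1 -> sum_f_R0 (fun k => r ^ k) N <= 1 / (1 - r).
Proof.
  intros Hr. rewrite tech3 by lra. assert (0 <= r ^ S N) by (apply pow_le; lra).
  unfold Rdiv. apply Rmult_le_compat_r; [left; apply Rinv_0_lt_compat|]; lra.
Qed.

Lemma Un_cv_of_geometric_bound (u : nat -> R) l K r N0 : 0 <= r < 1 ->
  (forall n, (N0 <= n)%nat -> Rabs (u n - l) <= K * r ^ n) -> Un_cv u l.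
Proof.
  intros Hr Hu e He.
  destruct (pow_lt_1_zero r ltac:(rewrite Rabs_right; lra) (e / (Rabs K + 1))
    ltac:(apply Rdiv_lt_0_compat; pose proof (Rabs_pos K); lra)) as [N1 HN1].
  exists (max N0 N1). intros n Hn. unfold Rdist.
  specialize (HN1 n ltac:(lia)). specialize (Hu n ltac:(lia)).
  assert (0 <= r ^ n) by (apply pow_le; lra).
  rewrite Rabs_right in HN1 by lra.
  apply (Rmult_lt_compat_r (Rabs K + 1)) in HN1; [|pose proof (Rabs_pos K); lra].
  unfold Rdiv in HN1. rewrite Rmult_assoc, Rinv_l, Rmult_1_r in HN1
    by (pose proof (Rabs_pos K); lra).
  pose proof (Rle_abs K). pose proof (Rabs_pos K). nra.
Qed.

(* The remainder in Stdlib's [cauchy_finite]: the square of the [N]-th partial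
   sum of [a] minus the first [N + 1] terms of its Cauchy square. *)
Definition cauchy_tail (a : nat -> R) (N : nat) : R :=
  sum_f_R0 (fun k => sum_f_R0 (fun l => a (S (l + k)) * a (N - l)%nat)
    (pred (N - k))) (pred N).

Lemma cauchy_tail_nonneg a N : (0 < N)%nat ->
  (forall k, (1 <= k)%nat -> a k <= 0) -> 0 <= cauchy_tail a N.
Proof.
  intros HN Ha. apply sum_f_R0_nonneg; intros k Hk. apply sum_f_R0_nonneg; intros l Hl.
  assert (a (S (l + k)) <= 0) by (apply Ha; lia).
  assert (a (N - l)%nat <= 0) by (apply Ha; lia).
  nra.
Qed.

Lemma cauchy_tail_le a N M rho : (0 < N)%nat -> 0 <= rho < 1 ->
  (forall k, Rabs (a k) <= M * rho ^ (2 * k)) ->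
  cauchy_tail a N <= M ^ 2 * rho ^ S N / (1 - rho) ^ 2.
Proof.
  intros HN Hr Ha.
  assert (HM : 0 <= M) by (specialize (Ha 0%nat); simpl in Ha; pose proof (Rabs_pos (a 0%nat)); lra).
  assert (Hgeo := fun n => sum_pow_le rho n Hr).
  assert (Hinv : 0 < 1 / (1 - rho)) by (apply Rdiv_lt_0_compat; lra).
  set (C := M ^ 2 * rho ^ S N).
  assert (HC : 0 <= C) by (apply Rmult_le_pos; [nra|apply pow_le; lra]).
  apply Rle_trans with (sum_f_R0 (fun k => rho ^ k * (C / (1 - rho))) (pred N)).
  - apply sum_Rle; intros k Hk.
    apply Rle_trans with (sum_f_R0 (fun l => rho ^ l * (C * rho ^ k)) (pred (N - k))).
    + apply sum_Rle; intros l Hl.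
      assert (Hprod : a (S (l + k)) * a (N - l)%nat <= M ^ 2 * rho ^ (2 * (S N + k))).
      { apply Rle_trans with (Rabs (a (S (l + k))) * Rabs (a (N - l)%nat)).
        - rewrite <- Rabs_mult. apply Rle_abs.
        - replace (2 * (S N + k))%nat with (2 * S (l + k) + 2 * (N - l))%nat by lia.
          rewrite pow_add.
          replace (M ^ 2 * (rho ^ (2 * S (l + k)) * rho ^ (2 * (N - l))))
            with (M * rho ^ (2 * S (l + k)) * (M * rho ^ (2 * (N - l)))) by ring.
          apply Rmult_le_compat; auto using Rabs_pos. }
      assert (Hexp : rho ^ (2 * (S N + k)) <= rho ^ (S N + k + l)).
      { apply pow_antimono; [lra|lia]. }
      rewrite !pow_add in Hexp. unfold C.
      assert (0 <= M ^ 2) by nra. nra.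
    + rewrite <- scal_sum. specialize (Hgeo (pred (N - k))).
      assert (0 <= C * rho ^ k) by (apply Rmult_le_pos; [|apply pow_le]; lra).
      unfold Rdiv. replace (rho ^ k * (C * / (1 - rho))) with (C * rho ^ k * (1 / (1 - rho)))
        by (field; lra).
      apply Rmult_le_compat_l; assumption.
  - rewrite <- scal_sum. specialize (Hgeo (pred N)).
    replace (C / (1 - rho) ^ 2) with (C / (1 - rho) * (1 / (1 - rho))) by (field; lra).
    apply Rmult_le_compat_l; [|assumption].
    unfold Rdiv. apply Rmult_le_pos; [|left; apply Rinv_0_lt_compat]; lra.
Qed.

(** * The infinite system *)

Section Solution.

Variables (c eps T : R) (phi : nat -> R -> R).
Hypotheses (hc : 0 < c) (heps : 0 < eps) (hsol : is_solution c eps T phi).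

Definition cauchy_conv (j : nat) (t : R) : R :=
  sum_f_R0 (fun k => phi k t * phi (j - k)%nat t) j.

Definition system_rhs (j : nat) (t : R) : R :=
  match j with
  | 0%nat => phi 0%nat t ^ 2 - eps
  | 1%nat => 2 * phi 0%nat t * phi 1%nat t + eps
  | _ => cauchy_conv j t
  end.

Lemma phi_has_deriv_on j : has_deriv_on (phi j) (system_rhs j) 0 T.
Proof.
  destruct hsol as (H0 & _ & H1 & _ & H2).
  destruct j as [|[|j]]; [exact H0|exact H1|apply H2; lia].
Qed.

Lemma phi_at_end j : phi j T = match j with 0%nat => c | 1%nat => - c | _ => 0 end.
Proof.
  destruct hsol as (_ & HT0 & _ & HT1 & H2).
  destruct j as [|[|j]]; [exact HT0|exact HT1|apply H2; lia].
Qed.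

Lemma phi0_eq_riccati t : 0 <= t <= T -> phi 0%nat t = riccati (sqrt eps) c T t.
Proof.
  intros Ht. set (F := riccati (sqrt eps) c T).
  assert (Hw : 0 < sqrt eps) by (apply sqrt_lt_R0; exact heps).
  assert (Hww : sqrt eps * sqrt eps = eps) by (apply sqrt_sqrt; lra).
  assert (HF := riccati_has_deriv_on (sqrt eps) c T Hw (Rlt_le _ _ hc)).
  assert (HFT : F T = c) by (apply riccati_at_end; exact Hw).
  assert (HFnn : forall s, 0 <= s <= T -> 0 <= F s)
    by (intros s Hs; apply riccati_bounds; lra).
  assert (HP := phi_has_deriv_on 0). assert (HPT := phi_at_end 0).
  unfold system_rhs in HP. cbv iota in HPT. fold F in HF.
  apply Rle_antisym.
  - enough (phi 0%nat t - F t <= 0) by lra.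
    apply (nonpos_of_backward_gronwall _ _ 0 T 0 (has_deriv_on_minus _ _ _ _ _ _ HP HF));
      [rewrite HPT, HFT; lra|lra| |exact Ht].
    intros s Hs Hd. specialize (HFnn s Hs). rewrite Hww. nra.
  - enough (F t - phi 0%nat t <= 0) by lra.
    apply (nonpos_of_backward_gronwall _ _ 0 T 1 (has_deriv_on_minus _ _ _ _ _ _ HF HP));
      [rewrite HPT, HFT; lra|lra| |exact Ht].
    intros s Hs Hd. specialize (HFnn s Hs). rewrite Hww. nra.
Qed.

Lemma phi0_pos t : 0 <= t <= T -> 0 < phi 0%nat t.
Proof.
  intros Ht. rewrite phi0_eq_riccati by exact Ht.
  apply riccati_pos; [apply sqrt_lt_R0|..]; lra.
Qed.

Definition phi0_max : R := ((sqrt eps + c) * exp (2 * sqrt eps * T) + c) / 2.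

Lemma phi0_le_max t : 0 <= t <= T -> phi 0%nat t <= phi0_max.
Proof.
  intros Ht. rewrite phi0_eq_riccati by exact Ht.
  assert (Hw : 0 < sqrt eps) by (apply sqrt_lt_R0; exact heps).
  destruct (riccati_bounds (sqrt eps) c T t Hw ltac:(lra) ltac:(lra)) as [_ H].
  assert (exp (2 * sqrt eps * (T - t)) <= exp (2 * sqrt eps * T))
    by (apply exp_le_exp_compat; nra).
  unfold phi0_max. nra.
Qed.

Lemma phi_nonpos j : (1 <= j)%nat -> forall t, 0 <= t <= T -> phi j t <= 0.
Proof.
  induction j as [j IH] using lt_wf_ind. intros Hj. assert (HT := phi_at_end j).
  apply (nonpos_of_backward_gronwall _ _ 0 T 0 (phi_has_deriv_on j)); [|lra|].
  { destruct j as [|[|j]]; [lia|rewrite HT; lra|rewrite HT; lra]. }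
  intros s Hs Hpos. rewrite Ropp_0, Rmult_0_l. specialize (phi0_pos s Hs) as H0.
  destruct j as [|[|j]]; [lia|unfold system_rhs; nra|].
  apply sum_f_R0_nonneg; intros k Hk.
  destruct (Nat.eq_dec k 0) as [->|Hk0]; [rewrite Nat.sub_0_r; nra|].
  destruct (Nat.eq_dec k (S (S j))) as [->|Hkj]; [rewrite Nat.sub_diag; nra|].
  assert (phi k s <= 0) by (apply IH; lia || lra).
  assert (phi (S (S j) - k)%nat s <= 0) by (apply IH; lia || lra).
  nra.
Qed.

Definition gen_sum (z : R) (N : nat) (t : R) : R := sum_f_R0 (fun j => z ^ j * phi j t) N.

Definition gen_tail (z : R) (N : nat) (t : R) : R := cauchy_tail (fun k => z ^ k * phi k t) N.

Lemma weighted_cauchy_conv z j t :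
  z ^ j * cauchy_conv j t =
  sum_f_R0 (fun k => (z ^ k * phi k t) * (z ^ (j - k) * phi (j - k)%nat t)) j.
Proof.
  unfold cauchy_conv. rewrite scal_sum. apply sum_eq; intros k Hk.
  replace (z ^ j) with (z ^ k * z ^ (j - k)) by (rewrite <- pow_add; f_equal; lia).
  ring.
Qed.

Lemma sum_weighted_rhs z N t : (1 <= N)%nat ->
  sum_f_R0 (fun j => z ^ j * system_rhs j t) N =
  sum_f_R0 (fun j => sum_f_R0 (fun k => (z ^ k * phi k t) * (z ^ (j - k) * phi (j - k)%nat t)) j) N
  - eps * (1 - z).
Proof.
  intros HN. induction N as [|N IH]; [lia|].
  destruct N as [|N]; [simpl; ring|].
  rewrite tech5, IH, (tech5 _ (S N)) by lia.
  change (system_rhs (S (S N)) t) with (cauchy_conv (S (S N)) t).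
  rewrite weighted_cauchy_conv. ring.
Qed.

Lemma gen_sum_sq z N t : (1 <= N)%nat ->
  gen_sum z N t ^ 2 =
  sum_f_R0 (fun j => sum_f_R0 (fun k => (z ^ k * phi k t) * (z ^ (j - k) * phi (j - k)%nat t)) j) N
  + gen_tail z N t.
Proof.
  intros HN. unfold gen_sum, gen_tail, cauchy_tail.
  replace (_ ^ 2) with (sum_f_R0 (fun j => z ^ j * phi j t) N * sum_f_R0 (fun j => z ^ j * phi j t) N)
    by ring.
  apply cauchy_finite. lia.
Qed.

Lemma gen_sum_has_deriv_on z N : (1 <= N)%nat ->
  has_deriv_on (gen_sum z N) (fun t => gen_sum z N t ^ 2 - gen_tail z N t - eps * (1 - z)) 0 T.
Proof.
  intros HN.
  apply has_deriv_on_ext with (3 := has_deriv_on_sum (fun j t => z ^ j * phi j t)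
    (fun j t => z ^ j * system_rhs j t) 0 T N ltac:(intros k _;
      apply has_deriv_on_ext with (3 := has_deriv_on_mult _ _ _ _ 0 T
        (has_deriv_on_const (z ^ k) 0 T) (phi_has_deriv_on k)); intros; simpl; ring)).
  - reflexivity.
  - intros t _. rewrite sum_weighted_rhs, gen_sum_sq by exact HN. ring.
Qed.

Lemma gen_sum_at_end z N : (1 <= N)%nat -> gen_sum z N T = c * (1 - z).
Proof.
  intros HN. induction N as [|N IH]; [lia|].
  unfold gen_sum in *. rewrite tech5. destruct N as [|N].
  - simpl. rewrite (phi_at_end 0), (phi_at_end 1). ring.
  - rewrite IH, (phi_at_end (S (S N))) by lia. ring.
Qed.

Lemma gen_sum_le_phi0 z N t : 0 <= z -> 0 <= t <= T -> gen_sum z N t <= phi 0%nat t.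
Proof.
  intros Hz Ht. induction N as [|N IH]; unfold gen_sum in *; [simpl; lra|].
  rewrite tech5. assert (phi (S N) t <= 0) by (apply phi_nonpos; [lia|exact Ht]).
  assert (0 <= z ^ S N) by (apply pow_le; exact Hz). nra.
Qed.

Lemma gen_sum_antimono z z' N t : 0 <= z <= z' -> 0 <= t <= T ->
  gen_sum z' N t <= gen_sum z N t.
Proof.
  intros Hz Ht. apply sum_Rle; intros [|j] _; [simpl; lra|].
  assert (phi (S j) t <= 0) by (apply phi_nonpos; [lia|exact Ht]).
  assert (z ^ S j <= z' ^ S j) by (apply pow_incr; lra). nra.
Qed.

Lemma gen_tail_nonneg z N t : 0 <= z -> (1 <= N)%nat -> 0 <= t <= T -> 0 <= gen_tail z N t.
Proof.
  intros Hz HN Ht. apply cauchy_tail_nonneg; [lia|]. intros k Hk.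
  assert (phi k t <= 0) by (apply phi_nonpos; assumption).
  assert (0 <= z ^ k) by (apply pow_le; exact Hz). nra.
Qed.

(* The partial sums obey the Riccati equation of [F] up to the nonnegative
   Cauchy tail. *)
Lemma gen_sum_lower_bound z F N :
  0 <= z -> has_deriv_on F (fun t => F t ^ 2 - eps * (1 - z)) 0 T ->
  F T = c * (1 - z) -> (forall t, 0 <= t <= T -> 0 <= F t) -> (1 <= N)%nat ->
  forall t, 0 <= t <= T -> F t <= gen_sum z N t.
Proof.
  intros Hz HF HFT HFnn HN t Ht. enough (F t - gen_sum z N t <= 0) by lra.
  apply (nonpos_of_backward_gronwall _ _ 0 T 1
    (has_deriv_on_minus _ _ _ _ _ _ HF (gen_sum_has_deriv_on z N HN)));
    [rewrite HFT, gen_sum_at_end by exact HN; lra|lra| |exact Ht].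
  intros s Hs Hd. specialize (HFnn s Hs).
  assert (0 <= gen_tail z N s) by (apply gen_tail_nonneg; assumption).
  nra.
Qed.

Lemma gen_sum_upper_bound z F N eta :
  0 <= z -> has_deriv_on F (fun t => F t ^ 2 - eps * (1 - z)) 0 T ->
  F T = c * (1 - z) -> (forall t, 0 <= t <= T -> 0 <= F t) -> (1 <= N)%nat ->
  (forall t, 0 <= t <= T -> gen_tail z N t <= eta) ->
  forall t, 0 <= t <= T -> gen_sum z N t - F t <= eta * (exp (T - t) - 1).
Proof.
  intros Hz HF HFT HFnn HN Htail t Ht.
  assert (Hlow := gen_sum_lower_bound z F N Hz HF HFT HFnn HN).
  assert (Heta : 0 <= eta) by (apply Rle_trans with (gen_tail z N T);
    [apply gen_tail_nonneg; [exact Hz|exact HN|lra]|apply Htail; lra]).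
  assert (Hexp := has_deriv_on_minus _ _ _ _ _ _
    (has_deriv_on_exp_backward eta 1 T 0 T) (has_deriv_on_const eta 0 T)).
  enough (gen_sum z N t - F t - (eta * exp (1 * (T - t)) - eta) <= 0)
    by (rewrite Rmult_1_l in *; lra).
  apply (nonpos_of_backward_gronwall _ _ 0 T 0 (has_deriv_on_minus _ _ _ _ _ _
    (has_deriv_on_minus _ _ _ _ _ _ (gen_sum_has_deriv_on z N HN) HF) Hexp));
    [|lra| |exact Ht].
  - rewrite gen_sum_at_end, HFT by exact HN.
    replace (1 * (T - T)) with 0 by ring. rewrite exp_0. lra.
  - intros s Hs _. specialize (Htail s Hs). specialize (HFnn s Hs). specialize (Hlow s Hs).
    assert (1 <= exp (1 * (T - s))) by (apply one_le_exp; lra). nra.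
Qed.

Definition gen_fun (z t : R) : R := riccati (sqrt (eps * (1 - z))) (c * (1 - z)) T t.

Lemma gen_fun_has_deriv_on z : z < 1 ->
  has_deriv_on (gen_fun z) (fun t => gen_fun z t ^ 2 - eps * (1 - z)) 0 T.
Proof.
  intros Hz. apply has_deriv_on_ext with (3 := riccati_has_deriv_on
    (sqrt (eps * (1 - z))) (c * (1 - z)) T ltac:(apply sqrt_lt_R0; nra) ltac:(nra)).
  - reflexivity.
  - intros t _. rewrite sqrt_sqrt by nra. reflexivity.
Qed.

Lemma gen_fun_at_end z : z < 1 -> gen_fun z T = c * (1 - z).
Proof. intros Hz. apply riccati_at_end, sqrt_lt_R0. nra. Qed.

Lemma gen_fun_nonneg z t : z < 1 -> 0 <= t <= T -> 0 <= gen_fun z t.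
Proof. intros Hz Ht. apply riccati_bounds; [apply sqrt_lt_R0|..]; nra. Qed.

Lemma weighted_phi_bound z k t : 0 <= z < 1 -> 0 <= t <= T ->
  z ^ k * Rabs (phi k t) <= phi0_max.
Proof.
  intros Hz Ht. assert (Hmax := phi0_le_max t Ht). assert (Hpos := phi0_pos t Ht).
  destruct k as [|k]; [simpl; rewrite Rabs_right; lra|].
  assert (Hlow := gen_sum_lower_bound z (gen_fun z) (S k) ltac:(lra)
    (gen_fun_has_deriv_on z ltac:(lra)) (gen_fun_at_end z ltac:(lra))
    (fun s => gen_fun_nonneg z s ltac:(lra)) ltac:(lia) t Ht).
  assert (Hk := gen_sum_le_phi0 z k t ltac:(lra) Ht).
  assert (Hnn := gen_fun_nonneg z t ltac:(lra) Ht).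
  unfold gen_sum in *. rewrite tech5 in Hlow.
  rewrite Rabs_left1 by (apply phi_nonpos; [lia|exact Ht]). lra.
Qed.

Lemma gen_tail_le z N t : 0 <= z < 1 -> (1 <= N)%nat -> 0 <= t <= T ->
  gen_tail z N t <= phi0_max ^ 2 * ((1 + z) / 2) ^ S N / (1 - (1 + z) / 2) ^ 2.
Proof.
  intros Hz HN Ht. set (rho := (1 + z) / 2).
  set (z' := z / rho ^ 2).
  assert (Hrho : 0 < rho ^ 2) by (unfold rho; nra).
  assert (Hz' : 0 <= z' < 1).
  { unfold z'. split; [apply Rdiv_le_0_compat; lra|].
    apply Rmult_lt_reg_r with (rho ^ 2); [exact Hrho|].
    unfold Rdiv. rewrite Rmult_assoc, Rinv_l by lra. unfold rho. nra. }
  (* [weighted_phi_bound] at [z' < 1] gives [z^k |phi^k| <= phi0_max rho^(2k)]. *)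
  apply cauchy_tail_le; [lia|unfold rho; lra|]. intros k.
  rewrite Rabs_mult, Rabs_right by (apply Rle_ge, pow_le; lra).
  replace z with (rho ^ 2 * z') by (unfold z', rho; field; lra).
  rewrite Rpow_mult_distr, <- pow_mult, Rmult_assoc, (Rmult_comm phi0_max).
  apply Rmult_le_compat_l; [apply pow_le; unfold rho; lra|].
  apply weighted_phi_bound; assumption.
Qed.

Lemma gen_sum_cv z t : 0 <= z < 1 -> 0 <= t <= T ->
  Un_cv (fun N => gen_sum z N t) (gen_fun z t).
Proof.
  intros Hz Ht. set (rho := (1 + z) / 2).
  apply (Un_cv_of_geometric_bound _ _
    (phi0_max ^ 2 * rho * exp T / (1 - rho) ^ 2) rho 1); [unfold rho; lra|].
  intros N HN.
  assert (HF := gen_fun_has_deriv_on z ltac:(lra)).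
  assert (HFT := gen_fun_at_end z ltac:(lra)).
  assert (HFnn := fun s => gen_fun_nonneg z s ltac:(lra)).
  assert (Hlow := gen_sum_lower_bound z _ N ltac:(lra) HF HFT HFnn HN t Ht).
  assert (Hup := gen_sum_upper_bound z _ N _ ltac:(lra) HF HFT HFnn HN
    (fun s Hs => gen_tail_le z N s Hz HN Hs) t Ht).
  fold rho in Hup. rewrite Rabs_right by lra. eapply Rle_trans; [exact Hup|].
  assert (0 <= phi0_max ^ 2 * rho ^ S N / (1 - rho) ^ 2).
  { apply Rdiv_le_0_compat; [apply Rmult_le_pos; [nra|apply pow_le]|]; unfold rho; nra. }
  assert (exp (T - t) <= exp T) by (apply exp_le_exp_compat; lra).
  replace (phi0_max ^ 2 * rho * exp T / (1 - rho) ^ 2 * rho ^ N)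
    with (phi0_max ^ 2 * rho ^ S N / (1 - rho) ^ 2 * exp T)
    by (simpl; field; unfold rho; lra).
  nra.
Qed.

Lemma gen_fun_le s t : 0 < s <= 1 -> 0 <= t <= T -> gen_fun (1 - s ^ 2) t <= s * phi0_max.
Proof.
  intros Hs Ht. unfold gen_fun. replace (1 - (1 - s ^ 2)) with (s ^ 2) by ring.
  assert (Hw : sqrt (eps * s ^ 2) = sqrt eps * s)
    by (rewrite sqrt_mult_alt, sqrt_pow2; lra).
  assert (Heps : 0 < sqrt eps) by (apply sqrt_lt_R0; lra).
  rewrite Hw. destruct (riccati_bounds (sqrt eps * s) (c * s ^ 2) T t
    ltac:(nra) ltac:(nra) ltac:(lra)) as [_ Hup].
  assert (Hws : 0 <= sqrt eps * s <= sqrt eps) by nra.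
  assert (HE : exp (2 * (sqrt eps * s) * (T - t)) <= exp (2 * sqrt eps * T))
    by (apply exp_le_exp_compat; nra).
  assert (1 <= exp (2 * (sqrt eps * s) * (T - t))) by (apply one_le_exp; nra).
  assert (Hcs : c * s ^ 2 <= c * s) by (apply Rmult_le_compat_l; [lra|simpl; nra]).
  assert ((sqrt eps * s + c * s ^ 2) * exp (2 * (sqrt eps * s) * (T - t))
          <= s * (sqrt eps + c) * exp (2 * sqrt eps * T))
    by (apply Rmult_le_compat; nra).
  unfold phi0_max. nra.
Qed.

Lemma gen_sum_one_cv t : 0 <= t <= T -> Un_cv (fun N => gen_sum 1 N t) 0.
Proof.
  intros Ht e He.
  assert (Hmax : 0 < phi0_max) by (pose proof (phi0_pos t Ht); pose proof (phi0_le_max t Ht); lra).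
  set (s := Rmin (1 / 2) (e / 2 / phi0_max)).
  assert (Hs : 0 < s) by (apply Rmin_glb_lt; [lra|apply Rdiv_lt_0_compat; lra]).
  assert (s <= 1 / 2) by apply Rmin_l. assert (Hse : s <= e / 2 / phi0_max) by apply Rmin_r.
  assert (Hsmall : gen_fun (1 - s ^ 2) t <= e / 2).
  { apply Rle_trans with (s * phi0_max); [apply gen_fun_le; lra|].
    apply (Rmult_le_compat_r phi0_max) in Hse; [|lra].
    replace (e / 2 / phi0_max * phi0_max) with (e / 2) in Hse by (field; lra).
    lra. }
  assert (Hz : 0 <= 1 - s ^ 2 < 1) by nra.
  destruct (gen_sum_cv (1 - s ^ 2) t Hz Ht (e / 2) ltac:(lra)) as [N HN].
  exists (max N 1). intros n Hn. specialize (HN n ltac:(lia)).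
  unfold Rdist in *. rewrite Rminus_0_r. apply Rabs_def2 in HN.
  assert (Hzero : has_deriv_on (fun _ => 0) (fun t => 0 ^ 2 - eps * (1 - 1)) 0 T)
    by (apply has_deriv_on_ext with (3 := has_deriv_on_const 0 0 T); intros; cbv beta; ring).
  assert (Hlow := gen_sum_lower_bound 1 (fun _ => 0) n ltac:(lra) Hzero ltac:(cbv beta; ring)
    ltac:(intros; lra) ltac:(lia) t Ht).
  assert (Hmono := gen_sum_antimono (1 - s ^ 2) 1 n t ltac:(nra) Ht).
  rewrite Rabs_right by lra. lra.
Qed.

End Solution.

Theorem mainTheorem2 (c eps T : R) (phi : nat -> R -> R)
  (hc : 0 < c) (heps : 0 < eps) (hT : 0 < T)
  (hsol : is_solution c eps T phi) :
  forall t, 0 <= t <= T ->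
    phi 0%nat t =
      ((- eps - c * sqrt eps) * exp (2 * sqrt eps * (T - t)) + eps - c * sqrt eps) /
      ((- sqrt eps - c) * exp (2 * sqrt eps * (T - t)) - sqrt eps + c)
    /\ 0 < phi 0%nat t
    /\ infinite_sum (fun j => phi j t) 0
    /\ infinite_sum (fun k => 1 ^ k * phi k t) 0
    /\ (forall z, 0 <= z < 1 ->
          let w := sqrt (eps * (1 - z)) in
          infinite_sum (fun k => z ^ k * phi k t)
            (((- (eps * (1 - z)) - c * w * (1 - z)) * exp (2 * w * (T - t))
               + eps * (1 - z) - c * w * (1 - z)) /
             ((- w - c * (1 - z)) * exp (2 * w * (T - t)) - w + c * (1 - z)))).
Proof.
  intros t Ht.
  assert (Hsum1 := gen_sum_one_cv c eps T phi hc heps hsol t Ht).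
  split; [|split; [|split; [|split]]].
  - rewrite (phi0_eq_riccati c eps T phi hc heps hsol t Ht).
    symmetry. apply riccati_closed_form; [apply sqrt_lt_R0|..|ring]; try lra.
    symmetry. apply sqrt_sqrt. lra.
  - exact (phi0_pos c eps T phi hc heps hsol t Ht).
  - apply Un_cv_ext with (2 := Hsum1). intros N.
    apply sum_eq; intros j _. rewrite pow1. ring.
  - exact Hsum1.
  - intros z Hz w.
    rewrite (riccati_closed_form w (c * (1 - z))); [|apply sqrt_lt_R0; nra|nra|lra|
      symmetry; apply sqrt_sqrt; nra|ring].
    exact (gen_sum_cv c eps T phi hc heps hsol z t Hz Ht).
Qed.
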